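(* Let $S_1,\ldots,S_m$ be formulas ($m\ge1$). The doxastic states $\emptyset[S_1,S_2,\ldots,S_m]$ and $\emptyset[S_2,\ldots,S_m]$ coincide if and only if $S_1$ is equivalent to the disjunction of some (possibly none) Q-combinations of $S_2,\ldots,S_m$.
   Context: Propositional models are truth assignments over a finite set of variables; a formula used where a set of models is expected stands for its set of models. A doxastic state is a sequence $[C(0),\ldots,C(k)]$ of nonempty, pairwise disjoint sets of models covering all models; two doxastic states coincide when they are equal. The flat doxastic state $\emptyset$ is $[\text{all models}]$. Lexicographic revision: $C\,\mathrm{lex}(A) = [C(0)\cap A,\ldots,C(k)\cap A, C(0)\setminus A,\ldots,C(k)\setminus A]$, empty sets discarded. $\emptyset[S_1,\ldots,S_m]$ denotes $\emptyset$ revised lexicographically by $S_1$, then $S_2$, ..., then $S_m$. A Q-combination of formulas $T_1,\ldots,T_n$ is a formula $(B_1\equiv T_1)\wedge\cdots\wedge(B_n\equiv T_n)$ with each $B_i\in\{\mathsf{true},\mathsf{false}\}$. The empty disjunction is $\mathsf{false}$. *)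

From mathcomp Require Import all_boot.
Set Implicit Arguments. Unset Strict Implicit. Unset Printing Implicit Defensive.

Definition model (n : nat) := {ffun 'I_n -> bool}.

Inductive form (n : nat) : Type :=
| FVar of 'I_n
| FTrue | FFalse
| FNot of form n
| FAnd of form n & form n
| FOr of form n & form n
| FEquiv of form n & form n.

Arguments FTrue {n}. Arguments FFalse {n}.

Fixpoint sat n (v : model n) (f : form n) : bool :=
  match f with
  | FVar i => v i
  | FTrue => true
  | FFalse => false
  | FNot g => ~~ sat v g
  | FAnd g h => sat v g && sat v h
  | FOr g h => sat v g || sat v h
  | FEquiv g h => sat v g == sat v h
  end.

Definition mods n (f : form n) : {set model n} := [set v | sat v f].

Definition fequiv n (f g : form n) : Prop := mods f = mods g.

(* Doxastic states: sequences of sets of models (partition, most plausible first). *)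
Definition doxstate n := seq {set model n}.

Definition flat n : doxstate n := [:: [set: model n]].

Definition lex n (C : doxstate n) (A : {set model n}) : doxstate n :=
  [seq X <- [seq Y :&: A | Y <- C] ++ [seq Y :\: A | Y <- C] | X != set0].

(* emptyset[S_1,...,S_m]: flat state revised by S_1, then S_2, ..., then S_m. *)
Definition revise_seq n (S : seq (form n)) : doxstate n :=
  foldl (fun C f => lex C (mods f)) (flat n) S.

(* Q-combination (B_1 == T_1) /\ ... /\ (B_k == T_k), B_i in {true,false}
   (empty conjunction = true). *)
Definition bconst n (b : bool) : form n := if b then FTrue else FFalse.

Definition qcomb n (B : seq bool) (T : seq (form n)) : form n :=
  foldr (fun p acc => FAnd (FEquiv (bconst n p.1) p.2) acc) FTrue (zip B T).

Definition bigor n (l : seq (form n)) : form n := foldr (@FOr n) FFalse l.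

From mathcomp Require Import all_boot.
Set Implicit Arguments. Unset Strict Implicit. Unset Printing Implicit Defensive.

(* Since [lex] merely discards empty sets, emptyset[S_1,...,S_m] consists of
   the nonempty cells obtained by cutting the set of all models successively by
   S_1, ..., S_m.  Cutting by S_1 first amounts to cutting each cell of
   emptyset[S_2,...,S_m] into its parts inside and outside S_1; this adds
   exactly one nonempty cell for each cell meeting both S_1 and its complement,
   so the two states coincide iff S_1 cuts no cell.  The cells of
   emptyset[S_2,...,S_m] are the classes of models with the same truth values
   on S_2, ..., S_m, i.e. the sets of models of the Q-combinations, so this says
   that S_1 is a union of such classes. *)

Section Cells.
Variable T : finType.
Implicit Types (C L : seq {set T}) (X Y A : {set T}) (As : seq {set T}).

Lemma filter_neq0_map (g : {set T} -> {set T}) C :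
  g set0 = set0 ->
  [seq X <- map g [seq Y <- C | Y != set0] | X != set0] =
  [seq X <- map g C | X != set0].
Proof.
move=> g0; elim: C => //= Y C IH.
by case: eqP => [->|_] /=; rewrite IH // g0 eqxx.
Qed.

Definition lex_cells C A : seq {set T} :=
  [seq Y :&: A | Y <- C] ++ [seq Y :\: A | Y <- C].

Definition cells As : seq {set T} := foldl lex_cells [:: setT] As.

Lemma foldl_lex_cells C As :
  foldl lex_cells C As = [seq X :&: Y | X <- cells As, Y <- C].
Proof.
elim: As C => [|A As IH] C /=.
  by rewrite cats0 (eq_map (@setTI _)) map_id.
rewrite /cells /= !IH; elim: (cells As) => //= X L ->.
rewrite catA map_cat -!map_comp; congr ((_ ++ _) ++ _); apply: eq_map => Y /=.
  by rewrite setTI setIA setIAC.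
by rewrite setTD !setDE setIA setIAC.
Qed.

Definition split_cells A L : seq {set T} :=
  flatten [seq [:: X :&: A; X :\: A] | X <- L].

Lemma cells_cons A As : cells (A :: As) = split_cells A (cells As).
Proof.
rewrite {1}/cells /= foldl_lex_cells /split_cells.
by congr flatten; apply: eq_map => X /=; rewrite setTI setTD -setDE.
Qed.

Definition splits A X := (X :&: A != set0) && (X :\: A != set0).

Lemma neq0_splits A X :
  (X :&: A != set0) + (X :\: A != set0) = (X != set0) + splits A X.
Proof.
have -> : (X != set0) = (X :&: A != set0) || (X :\: A != set0).
  by rewrite -negb_and -setU_eq0 setID.
by rewrite /splits; case: (_ :&: _ != _); case: (_ :\: _ != _).
Qed.

Lemma count_neq0_split_cells A L :
  count (fun X => X != set0) (split_cells A L) =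
  count (fun X => X != set0) L + count (splits A) L.
Proof. by elim: L => //= X L IH; rewrite IH addnACA -neq0_splits addnA. Qed.

Lemma filter_neq0_split_cells A L :
  [seq X <- split_cells A L | X != set0] = [seq X <- L | X != set0] <->
  ~~ has (splits A) L.
Proof.
split=> [eqAL | /hasPn unsplit].
  move/(congr1 size): eqAL; rewrite !size_filter count_neq0_split_cells.
  rewrite -[X in _ = X]addn0 => /addnI /eqP.
  by rewrite -leqn0 leqNgt -has_count.
elim: L unsplit => //= X L IH unsplit.
rewrite IH => [|Y LY]; last by apply: unsplit; rewrite inE LY orbT.
have := unsplit X (mem_head X L); rewrite /splits negb_and !negbK.
case/orP=> unsplitX.
  have -> : X :\: A = X by apply/setDidPl; rewrite -setI_eq0.
  by rewrite unsplitX.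
have -> : X :&: A = X by apply/setIidPl; rewrite -setD_eq0.
by rewrite unsplitX.
Qed.

Definition signature (v : T) As := [seq v \in A | A <- As].

Lemma cells_class As X v :
  X \in cells As -> v \in X -> X = [set w | signature w As == signature v As].
Proof.
elim: As X v => [|A As IH] X v.
  by rewrite mem_seq1 => /eqP -> _; apply/setP=> w; rewrite !inE.
rewrite cells_cons => /flatten_mapP [X' X'cell].
rewrite !inE => /orP [] /eqP -> vX.
  have /setIP [vX' vA] := vX.
  apply/setP=> w; rewrite (IH _ _ X'cell vX') !inE /signature /= eqseq_cons vA.
  by rewrite eqb_id andbC.
have /setDP [vX' /negPf vA] := vX.
apply/setP=> w; rewrite (IH _ _ X'cell vX') !inE /signature /= eqseq_cons vA.
by rewrite eqbF_neg andbC.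
Qed.

Lemma cells_cover As v : exists2 X, X \in cells As & v \in X.
Proof.
elim: As => [|A As [X Xcell vX]]; first by exists setT; rewrite ?mem_seq1 ?inE.
rewrite cells_cons; case vA: (v \in A).
  exists (X :&: A); last by rewrite inE vX vA.
  by apply/flatten_mapP; exists X; rewrite ?mem_head.
exists (X :\: A); last by rewrite inE vX vA.
by apply/flatten_mapP; exists X; rewrite // !inE eqxx orbT.
Qed.

Definition signature_closed As A :=
  forall v w, signature v As = signature w As -> v \in A -> w \in A.

Lemma has_splits_cellsPn A As :
  ~~ has (splits A) (cells As) <-> signature_closed As A.
Proof.
split=> [/hasPn unsplit v w sig_vw vA | closedA].
  have [X Xcell vX] := cells_cover As v.
  have wX : w \in X by rewrite (cells_class Xcell vX) inE sig_vw.
  apply/negPn/negP => wNA; case/negP: (unsplit X Xcell).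
  apply/andP; split; apply/set0Pn.
    by exists v; apply/setIP.
  by exists w; apply/setDP.
apply/hasPn => X Xcell; apply/negP.
case/andP=> /set0Pn [v /setIP [vX vA]] /set0Pn [w /setDP [wX /negP wNA]].
apply: wNA (closedA v w _ vA).
by move: wX; rewrite (cells_class Xcell vX) inE => /eqP.
Qed.

Lemma signature_closedP As A :
  signature_closed As A <->
  exists Bs : seq (seq bool),
    all (fun B => size B == size As) Bs /\ A = [set v | signature v As \in Bs].
Proof.
split=> [closedA | [Bs [_ ->]] v w sig_vw]; last by rewrite !inE sig_vw.
exists [seq signature v As | v <- enum A]; split.
  by apply/allP=> _ /mapP [v _ ->]; rewrite size_map.
apply/setP=> v; rewrite inE; apply/idP/mapP => [vA | [w wA sig_vw]].
  by exists v; rewrite ?mem_enum.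
by apply: (closedA w v (esym sig_vw)); rewrite -mem_enum.
Qed.

End Cells.

Section Formulas.
Variable n : nat.
Implicit Types (C : doxstate n) (A : {set model n}) (Ss : seq (form n)).

Lemma lex_filter0 C A : lex [seq Y <- C | Y != set0] A = lex C A.
Proof. by rewrite /lex !filter_cat !filter_neq0_map ?set0I ?set0D. Qed.

Lemma setT_model_neq0 : [set: model n] != set0.
Proof. by apply/set0Pn; exists [ffun=> true]; rewrite inE. Qed.

Lemma revise_seqE Ss :
  revise_seq Ss = [seq X <- cells (map (@mods n) Ss) | X != set0].
Proof.
have flatE : flat n = [seq X <- [:: setT] | X != set0].
  by rewrite /= setT_model_neq0.
rewrite /revise_seq /cells flatE.
by elim: Ss [:: setT] => //= f Ss IH C; rewrite lex_filter0 IH.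
Qed.

Lemma sat_qcomb (v : model n) (B : seq bool) Ss :
  size B = size Ss ->
  sat v (qcomb B Ss) = (signature v (map (@mods n) Ss) == B).
Proof.
elim: Ss B => [|f Ss IH] [|b B] //= [sizeB].
rewrite IH // /signature /= eqseq_cons inE.
by case: b; case: (sat v f).
Qed.

Lemma sat_bigor (v : model n) (l : seq (form n)) :
  sat v (bigor l) = has (sat v) l.
Proof. by elim: l => //= f l ->. Qed.

Lemma mods_bigor_qcomb Ss (Bs : seq (seq bool)) :
  all (fun B => size B == size Ss) Bs ->
  mods (bigor [seq qcomb B Ss | B <- Bs]) =
  [set v | signature v (map (@mods n) Ss) \in Bs].
Proof.
move=> /allP sizeBs; apply/setP=> v; rewrite !inE sat_bigor has_map.
apply/hasP/idP => [[B BBs] | sigBs].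
  by rewrite /= sat_qcomb ?(eqP (sizeBs B BBs)) // => /eqP ->.
by exists (signature v (map (@mods n) Ss)); rewrite //= sat_qcomb ?size_map.
Qed.

End Formulas.

Theorem mainTheorem7 (n : nat) (S1 : form n) (Ss : seq (form n)) :
  revise_seq (S1 :: Ss) = revise_seq Ss <->
  exists Bs : seq (seq bool),
    all (fun B => size B == size Ss) Bs /\
    fequiv S1 (bigor [seq qcomb B Ss | B <- Bs]).
Proof.
rewrite !revise_seqE /= cells_cons.
apply: (iff_trans (filter_neq0_split_cells _ _)).
apply: (iff_trans (has_splits_cellsPn _ _)).
apply: (iff_trans (signature_closedP _ _)); rewrite size_map.
split=> -[Bs [sizeBs eqS1]]; exists Bs; split=> //.
  by rewrite /fequiv mods_bigor_qcomb.
by rewrite eqS1 mods_bigor_qcomb.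
Qed.
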